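(* Let $\Gamma$ be a totally ordered abelian group and let $D=\bigoplus_{s\in\Gamma_{\ge 0}}D_s$ be a domain graded by the nonnegative part of $\Gamma$ with $D_0=K$ a field, and assume $K$ is algebraically closed in $\operatorname{Frac} D$. Let $R=R(D)$ and let $\overline R$ be the integral closure of $R$ in its fraction field. Let $f,g\in D$ with $\deg(f)=\deg(g)=\delta\in\Gamma_{\ge0}$, and suppose $\frac fg\in\overline R$. Then $f_h=u\,g_h$ for some $u\in K$.
   Context: For an integral domain $D$ with fraction field $F$, the reciprocal complement $R(D)$ is the subring of $F$ generated by all $1/d$, $d\in D\setminus\{0\}$. For nonzero $f\in D$, $\deg(f)$ is the largest $s\in\Gamma_{\ge 0}$ such that the homogeneous component of $f$ in $D_s$ is nonzero, and $f_h$ denotes this homogeneous component of largest degree; $\deg(0)=-\infty$. *)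

From HB Require Import structures.
From mathcomp Require Import all_boot all_order all_algebra.
Set Implicit Arguments. Unset Strict Implicit. Unset Printing Implicit Defensive.
Import GRing.Theory.
Local Open Scope ring_scope.

Definition tot_ord_group (G : zmodType) (le : rel G) : Prop :=
  [/\ (forall a, le a a),
      (forall a b, le a b -> le b a -> a = b),
      (forall a b c, le a b -> le b c -> le a c),
      (forall a b, le a b || le b a)
    & (forall a b c, le a b -> le (a + c) (b + c))].

Definition lt_of (G : zmodType) (le : rel G) (a b : G) : bool :=
  (a != b) && le a b.

(* [comp s x] is the homogeneous component of x in D_s. *)
Definition graded_by (G : zmodType) (le : rel G) (D : idomainType)
  (comp : G -> D -> D) : Prop :=
  [/\ (forall s x y, comp s (x + y) = comp s x + comp s y)
    /\ (forall s x, ~~ le 0 s -> comp s x = 0),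
      (forall s t x, comp t (comp s x) = if t == s then comp s x else 0),
      (forall x, exists S : seq G,
          [/\ uniq S, x = (\sum_(s <- S) comp s x)
            & (forall s, s \notin S -> comp s x = 0)]),
      (forall s t x y, comp (s + t) (comp s x * comp t y) = comp s x * comp t y)
    & comp 0 1 = 1].

Definition inK (G : zmodType) (D : idomainType) (comp : G -> D -> D) (x : D) :=
  comp 0 x = x.

Definition deg0_field (G : zmodType) (D : idomainType) (comp : G -> D -> D) :=
  forall x, inK comp x -> x != 0 -> exists y, inK comp y /\ x * y = 1.

Definition K_alg_closed_in_frac (G : zmodType) (D : idomainType)
  (comp : G -> D -> D) : Prop :=
  forall x : {fraction D},
    (exists p : {poly D}, [/\ p != 0, (forall i, inK comp p`_i)
                             & root (map_poly (@FracField.tofrac D) p) x]) ->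
    exists k, inK comp k /\ x = FracField.tofrac k.

Inductive inRD (D : idomainType) : {fraction D} -> Prop :=
  | inRD_inv d : d != 0 -> inRD (FracField.tofrac d)^-1
  | inRD_1 : inRD 1
  | inRD_opp x : inRD x -> inRD (- x)
  | inRD_add x y : inRD x -> inRD y -> inRD (x + y)
  | inRD_mul x y : inRD x -> inRD y -> inRD (x * y).

Definition in_frac_RD (D : idomainType) (x : {fraction D}) : Prop :=
  exists a b, [/\ inRD a, inRD b, b != 0 & x = a / b].

Definition in_int_closure_RD (D : idomainType) (x : {fraction D}) : Prop :=
  in_frac_RD x /\
  exists p : {poly {fraction D}},
    [/\ p \is monic, (forall i, inRD p`_i) & root p x].

(* deg f = delta (in particular f != 0); the top component f_h is comp delta f *)
Definition has_deg (G : zmodType) (le : rel G) (D : idomainType)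
  (comp : G -> D -> D) (f : D) (delta : G) : Prop :=
  le 0 delta /\ comp delta f != 0 /\
  forall s, lt_of le delta s -> comp s f = 0.

From mathcomp Require Import all_boot all_order all_algebra.
From mathcomp Require Import ring.
From Stdlib Require Import IndefiniteDescription.
Set Implicit Arguments. Unset Strict Implicit. Unset Printing Implicit Defensive.
Import GRing.Theory.
Local Open Scope ring_scope.

(* Sending a quotient a/b with deg a <= deg b = beta to the ratio a_beta/b_beta
   of the beta-components is well defined and behaves like a ring morphism
   ("leading ratio").  It maps every generator 1/d of R(D) into K: to
   1/d_0 if deg d = 0 and to 0 otherwise; hence it maps all of R(D) into K.
   Applying it to a monic equation of f/g over R(D) shows that f_h/g_h is a
   root of a nonzero polynomial over K, so f_h/g_h lies in K because K is
   algebraically closed in Frac D. *)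

Section OrderedGroup.
Variables (G : zmodType) (le : rel G).
Hypothesis hG : tot_ord_group le.

Lemma leG_refl a : le a a.
Proof. by case: hG. Qed.

Lemma leG_anti a b : le a b -> le b a -> a = b.
Proof. by case: hG => _ h _ _ _; apply: h. Qed.

Lemma leG_trans a b c : le a b -> le b c -> le a c.
Proof. by case: hG => _ _ h _ _; apply: h. Qed.

Lemma leG_total a b : le a b || le b a.
Proof. by case: hG. Qed.

Lemma leG_addr a b c : le a b -> le (a + c) (b + c).
Proof. by case: hG => _ _ _ _; apply. Qed.

Lemma leG_addl a b c : le a b -> le (c + a) (c + b).
Proof. by rewrite ![c + _]addrC; apply: leG_addr. Qed.

Lemma leG_add s a t b : le s a -> le t b -> le (s + t) (a + b).
Proof. by move=> hsa htb; apply: leG_trans (leG_addr t hsa) (leG_addl a htb). Qed.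

Lemma eqG_add_le s a t b :
  le s a -> le t b -> (a + b == s + t) = (a == s) && (b == t).
Proof.
move=> hsa htb; apply/eqP/andP => [E|[/eqP-> /eqP->] //]; split; apply/eqP.
- apply: (@addIr _ b); apply: leG_anti; last exact: leG_addr.
  by rewrite E; apply: leG_addl.
- apply: (@addrI _ a); apply: leG_anti; last exact: leG_addl.
  by rewrite E; apply: leG_addr.
Qed.

Lemma seq_maxG (S : seq G) :
  S != [::] -> exists2 b, b \in S & forall s, s \in S -> le s b.
Proof.
elim: S => [//|s0 [|s1 S] IH _].
  by exists s0 => [|s]; rewrite ?mem_head // inE => /eqP->; apply: leG_refl.
have [b bS hb] := IH isT.
case/orP: (leG_total b s0) => [hbs0|hs0b].
  exists s0; first exact: mem_head.
  move=> s; rewrite inE => /orP[/eqP->|/hb hsb]; first exact: leG_refl.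
  exact: leG_trans hsb hbs0.
exists b; first by rewrite inE bS orbT.
by move=> s; rewrite inE => /orP[/eqP->|/hb].
Qed.

End OrderedGroup.

Section Grading.
Variables (G : zmodType) (le : rel G) (D : idomainType) (comp : G -> D -> D).
Hypothesis hG : tot_ord_group le.
Hypothesis hD : graded_by le comp.

Lemma compD s x y : comp s (x + y) = comp s x + comp s y.
Proof. by case: hD => [[h _] _ _ _ _]; apply: h. Qed.

Lemma comp_out s x : ~~ le 0 s -> comp s x = 0.
Proof. by case: hD => [[_ h] _ _ _ _]; apply: h. Qed.

Lemma compK s t x : comp t (comp s x) = if t == s then comp s x else 0.
Proof. by case: hD. Qed.

Lemma comp_supp x : exists S : seq G,
  x = \sum_(s <- S) comp s x /\ forall s, s \notin S -> comp s x = 0.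
Proof. by case: hD => _ _ h _ _; have [S [_ ? ?]] := h x; exists S. Qed.

Lemma compM s t x y : comp (s + t) (comp s x * comp t y) = comp s x * comp t y.
Proof. by case: hD. Qed.

Lemma comp0 s : comp s 0 = 0.
Proof. by apply: (@addrI _ (comp s 0)); rewrite -compD !addr0. Qed.

Lemma compN s x : comp s (- x) = - comp s x.
Proof. by apply: (@addrI _ (comp s x)); rewrite -compD !subrr comp0. Qed.

Lemma comp_sum s I (r : seq I) (F : I -> D) :
  comp s (\sum_(i <- r) F i) = \sum_(i <- r) comp s (F i).
Proof. by apply: (big_morph (comp s)); [exact: compD | exact: comp0]. Qed.

Lemma comp1 s : comp s 1 = (s == 0)%:R.
Proof. by case: hD => _ _ _ _ h1; rewrite -h1 compK h1; case: (s == 0). Qed.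

Lemma le0_comp s x : comp s x != 0 -> le 0 s.
Proof. by apply: contraNT => /comp_out ->; rewrite eqxx. Qed.

Lemma comp_pick S x a : x = \sum_(s <- S) comp s x ->
  comp a x = \sum_(s <- S) (if a == s then comp s x else 0).
Proof. by move=> Ex; rewrite {1}Ex comp_sum; apply: eq_bigr => s _; rewrite compK. Qed.

Lemma comp_mul_sum S T x y u :
  x = \sum_(s <- S) comp s x -> y = \sum_(t <- T) comp t y ->
  comp u (x * y) = \sum_(s <- S) \sum_(t <- T)
                     (if u == s + t then comp s x * comp t y else 0).
Proof.
move=> Ex Ey; rewrite {1}Ex {1}Ey big_distrl comp_sum; apply: eq_bigr => s _.
by rewrite big_distrr comp_sum; apply: eq_bigr => t _ /=; rewrite -{1}compM compK compM.
Qed.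

Definition deg_le (x : D) (a : G) := forall s, lt_of le a s -> comp s x = 0.

Lemma deg_le_comp x a s : deg_le x a -> comp s x != 0 -> le s a.
Proof.
move=> hx nzs; apply: contraT => nlsa; case/negP: nzs; apply/eqP/hx.
have las : le a s by move: (leG_total hG s a); rewrite (negbTE nlsa).
by rewrite /lt_of las andbT; apply: contraNneq nlsa => ->; apply: leG_refl.
Qed.

Lemma deg_le_trans x a b : deg_le x a -> le a b -> deg_le x b.
Proof.
move=> hx hab s /andP[nbs hbs]; apply: hx; rewrite /lt_of (leG_trans hG hab hbs).
rewrite andbT; apply: contraNneq nbs => eas.
by rewrite eas in hab; rewrite (leG_anti hG hab hbs).
Qed.

Lemma deg_le0 a : deg_le 0 a.
Proof. by move=> s _; rewrite comp0. Qed.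

Lemma deg_le1 : deg_le 1 0.
Proof. by move=> s /andP[ns0 _]; rewrite comp1 eq_sym (negbTE ns0). Qed.

Lemma deg_leN x a : deg_le x a -> deg_le (- x) a.
Proof. by move=> hx s /hx; rewrite compN => ->; rewrite oppr0. Qed.

Lemma deg_leD x y a : deg_le x a -> deg_le y a -> deg_le (x + y) a.
Proof. by move=> hx hy s hs; rewrite compD hx // hy // addr0. Qed.

Lemma comp_mul_nz_le x y a b s t : deg_le x a -> deg_le y b ->
  comp s x * comp t y != 0 -> le s a /\ le t b.
Proof.
move=> hx hy; rewrite mulf_eq0 negb_or => /andP[nzx nzy].
by split; [apply: deg_le_comp nzx | apply: deg_le_comp nzy].
Qed.

Lemma deg_leM x y a b : deg_le x a -> deg_le y b -> deg_le (x * y) (a + b).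
Proof.
move=> hx hy u /andP[nu hu]; have [S [Ex _]] := comp_supp x.
have [T [Ey _]] := comp_supp y.
rewrite (comp_mul_sum _ Ex Ey) big1 // => s _; rewrite big1 // => t _.
case: eqP => // Eu; apply/eqP; apply: contraNT nu => /(comp_mul_nz_le hx hy)[hsa htb].
by rewrite Eu in hu *; apply/eqP/(leG_anti hG hu (leG_add hG hsa htb)).
Qed.

Lemma comp_deg_leM x y a b : deg_le x a -> deg_le y b ->
  comp (a + b) (x * y) = comp a x * comp b y.
Proof.
move=> hx hy; have [S [Ex _]] := comp_supp x; have [T [Ey _]] := comp_supp y.
rewrite (comp_mul_sum _ Ex Ey) (comp_pick a Ex) (comp_pick b Ey) big_distrl.
apply: eq_bigr => s _; rewrite big_distrr; apply: eq_bigr => t _ /=.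
have [z|nz] := eqVneq (comp s x * comp t y) 0.
  by rewrite z if_same; do 2 case: eqP => _; rewrite ?mulr0 ?mul0r ?z.
have [hsa htb] := comp_mul_nz_le hx hy nz.
rewrite (eqG_add_le hG hsa htb).
by case: (a == s); case: (b == t); rewrite ?mulr0 ?mul0r.
Qed.

Lemma exists_deg x : x != 0 -> exists a, comp a x != 0 /\ deg_le x a.
Proof.
move=> nx; have [S [Ex nS]] := comp_supp x.
set S' := [seq s <- S | comp s x != 0].
have nS' : S' != [::].
  apply: contraNneq nx => S'0; rewrite Ex big1_seq // => s /andP[_ sS].
  apply/eqP; apply: contraT => nzs.
  have : s \in S' by rewrite mem_filter nzs.
  by rewrite S'0.
have [a aS' ha] := seq_maxG hG nS'; move: aS'; rewrite mem_filter => /andP[nza _].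
exists a; split => // s /andP[nas las]; apply/eqP; apply: contraNT nas => nzs.
have sS : s \in S by apply: contraNT nzs => /nS ->; rewrite eqxx.
by rewrite (leG_anti hG las (ha s _)) // mem_filter nzs.
Qed.

Lemma inK0 : inK comp 0.
Proof. exact: comp0. Qed.

Lemma inK1 : inK comp 1.
Proof. by rewrite /inK comp1 eqxx. Qed.

Lemma inKN k : inK comp k -> inK comp (- k).
Proof. by rewrite /inK compN => ->. Qed.

Lemma inKD k l : inK comp k -> inK comp l -> inK comp (k + l).
Proof. by rewrite /inK compD => -> ->. Qed.

Lemma inKM k l : inK comp k -> inK comp l -> inK comp (k * l).
Proof.
move=> hk hl; rewrite /inK -{1}hk -{1}hl.
by have := compM 0 0 k l; rewrite addr0 hk hl.
Qed.

Local Notation tf := (@FracField.tofrac D).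

Lemma tofrac_inj : injective tf.
Proof. by move=> x y /eqP; rewrite tofrac_eq => /eqP. Qed.

Definition leading_ratio (x k : {fraction D}) := exists a b beta,
  [/\ comp beta b != 0, deg_le b beta, deg_le a beta, x = tf a / tf b
    & tf (comp beta a) = k * tf (comp beta b)].

Lemma tofrac_comp_neq0 b beta : comp beta b != 0 -> tf b != 0.
Proof. by rewrite tofrac_eq0; apply: contraNneq => ->; rewrite comp0. Qed.

Lemma leading_ratio_tofrac a b beta : comp beta b != 0 ->
  deg_le b beta -> deg_le a beta ->
  leading_ratio (tf a / tf b) (tf (comp beta a) / tf (comp beta b)).
Proof.
move=> nzb hb ha; exists a, b, beta; split => //.
by rewrite divfK // tofrac_eq0.
Qed.

Lemma leading_ratio0 : leading_ratio 0 0.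
Proof.
exists 0, 1, 0; split; rewrite ?comp0 ?rmorph0 ?mul0r //.
- by rewrite comp1 eqxx oner_eq0.
- exact: deg_le1.
- exact: deg_le0.
Qed.

Lemma leading_ratio1 : leading_ratio 1 1.
Proof.
exists 1, 1, 0; split; rewrite ?rmorph1 ?divr1 ?mul1r //; try exact: deg_le1.
by rewrite comp1 eqxx oner_eq0.
Qed.

Lemma leading_ratioN x k : leading_ratio x k -> leading_ratio (- x) (- k).
Proof.
case=> a [b [be [nzb hb ha -> ek]]]; exists (- a), b, be; split => //.
- exact: deg_leN.
- by rewrite rmorphN mulNr.
- by rewrite compN rmorphN /= ek mulNr.
Qed.

Lemma leading_ratioD x k y l :
  leading_ratio x k -> leading_ratio y l -> leading_ratio (x + y) (k + l).
Proof.
case=> a [b [be [nzb hb ha -> ek]]]; case=> a' [b' [be' [nzb' hb' ha' -> el]]].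
have hab' := deg_leM ha hb'; have ha'b := deg_leM ha' hb; rewrite addrC in ha'b.
exists (a * b' + a' * b), (b * b'), (be + be'); split.
- by rewrite comp_deg_leM // mulf_neq0.
- exact: deg_leM.
- exact: deg_leD.
- rewrite addf_div ?(tofrac_comp_neq0 nzb) ?(tofrac_comp_neq0 nzb') //.
  by rewrite !(rmorphD, rmorphM).
rewrite compD comp_deg_leM // [be + be']addrC comp_deg_leM // addrC.
by rewrite comp_deg_leM // !(rmorphD, rmorphM) /= ek el; ring.
Qed.

Lemma leading_ratioM x k y l :
  leading_ratio x k -> leading_ratio y l -> leading_ratio (x * y) (k * l).
Proof.
case=> a [b [be [nzb hb ha -> ek]]]; case=> a' [b' [be' [nzb' hb' ha' -> el]]].
exists (a * a'), (b * b'), (be + be'); split.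
- by rewrite comp_deg_leM // mulf_neq0.
- exact: deg_leM.
- exact: deg_leM.
- by rewrite mulf_div !rmorphM.
by rewrite !comp_deg_leM // !rmorphM /= ek el; ring.
Qed.

Lemma leading_ratioX x k n : leading_ratio x k -> leading_ratio (x ^+ n) (k ^+ n).
Proof.
move=> hx; elim: n => [|n IH]; first by rewrite !expr0; apply: leading_ratio1.
by rewrite !exprS; apply: leading_ratioM.
Qed.

Lemma leading_ratio0_eq k : leading_ratio 0 k -> k = 0.
Proof.
case=> a [b [be [nzb _ _ ex ek]]].
have a0 : a = 0.
  apply: tofrac_inj; apply/eqP; move/eqP: ex; rewrite eq_sym mulf_eq0 invr_eq0.
  by rewrite (negbTE (tofrac_comp_neq0 nzb)) orbF rmorph0.
move: ek; rewrite a0 comp0 rmorph0 => /esym/eqP.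
by rewrite mulf_eq0 tofrac_eq0 (negbTE nzb) orbF => /eqP.
Qed.

Lemma leading_ratio_uniq x k l : leading_ratio x k -> leading_ratio x l -> k = l.
Proof.
move=> hk hl; apply/eqP; rewrite -subr_eq0; apply/eqP/leading_ratio0_eq.
by rewrite -(subrr x); apply: leading_ratioD => //; apply: leading_ratioN.
Qed.

Lemma leading_ratio_horner (p : {poly {fraction D}}) (q : {poly D}) x y :
  (forall i, leading_ratio p`_i (tf q`_i)) -> leading_ratio x y ->
  leading_ratio p.[x] (map_poly tf q).[y].
Proof.
move=> hpq hxy; set n := maxn (size p) (size q).
rewrite (@horner_coef_wide _ n) ?leq_maxl // (@horner_coef_wide _ n); last first.
  by rewrite size_map_inj_poly ?leq_maxr ?rmorph0 //; exact: tofrac_inj.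
apply: (big_ind2 leading_ratio leading_ratio0 (@leading_ratioD)) => i _.
by rewrite coef_map; apply: leading_ratioM; [apply: hpq | apply: leading_ratioX].
Qed.

Hypothesis hK : deg0_field comp.

Lemma leading_ratio_inv d : d != 0 ->
  exists k, inK comp k /\ leading_ratio (tf d)^-1 (tf k).
Proof.
move=> nzd; have [be [nzb hb]] := exists_deg nzd.
have [be0|nbe0] := eqVneq be 0; last first.
  exists 0; split; first exact: inK0.
  exists 1, d, be; split; rewrite ?rmorph1 ?div1r //.
    exact: deg_le_trans deg_le1 (le0_comp nzb).
  by rewrite comp1 (negbTE nbe0) !rmorph0 mul0r.
rewrite be0 in nzb hb.
have [k [inKk ek]] : exists k, inK comp k /\ comp 0 d * k = 1.
  by apply: hK nzb; rewrite /inK compK eqxx.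
exists k; split => //; exists 1, d, 0; split; rewrite ?rmorph1 ?div1r //.
  exact: deg_le1.
by rewrite comp1 eqxx -rmorphM mulrC ek rmorph1.
Qed.

Lemma leading_ratio_inRD c : inRD c -> exists k, inK comp k /\ leading_ratio c (tf k).
Proof.
elim=> {c} [d /leading_ratio_inv //| | x _ [k [inKk hk]]
  | x y _ [k [inKk hk]] _ [l [inKl hl]] | x y _ [k [inKk hk]] _ [l [inKl hl]]].
- by exists 1; rewrite rmorph1; split; [apply: inK1 | apply: leading_ratio1].
- exists (- k); rewrite rmorphN; split; [exact: inKN | exact: leading_ratioN].
- exists (k + l); rewrite rmorphD; split; [exact: inKD | exact: leading_ratioD].
- exists (k * l); rewrite rmorphM; split; [exact: inKM | exact: leading_ratioM].
Qed.

Hypothesis hA : K_alg_closed_in_frac comp.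

Lemma leading_ratio_int_closure x y : in_int_closure_RD x -> leading_ratio x y ->
  exists2 u, inK comp u & y = tf u.
Proof.
move=> [_ [p [monp inRDp rootp]]] hxy.
have /functional_choice[k hk] i := leading_ratio_inRD (inRDp i).
pose q := \poly_(i < size p) k i.
have hpq i : leading_ratio p`_i (tf q`_i).
  rewrite coef_poly; case: ltnP => [_|hi]; first exact: (hk i).2.
  by rewrite nth_default // rmorph0; apply: leading_ratio0.
have q0 : q`_(size p).-1 != 0.
  have := hpq (size p).-1; rewrite -lead_coefE (monicP monp).
  move=> /leading_ratio_uniq/(_ leading_ratio1) e1; apply/eqP => e0.
  by move: e1; rewrite e0 rmorph0 => /eqP; rewrite eq_sym oner_eq0.
have [u [inKu ->]] : exists u, inK comp u /\ y = tf u.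
  apply: hA; exists q; split.
  - by apply: contraNneq q0 => ->; rewrite coef0.
  - by move=> i; rewrite coef_poly; case: ltnP => _; [exact: (hk i).1 | exact: inK0].
  apply/rootP/leading_ratio0_eq.
  by rewrite -(rootP rootp); apply: leading_ratio_horner.
by exists u.
Qed.

End Grading.

Theorem mainTheorem9 (G : zmodType) (le : rel G) (D : idomainType)
  (comp : G -> D -> D) :
  tot_ord_group le ->
  graded_by le comp ->
  deg0_field comp ->
  K_alg_closed_in_frac comp ->
  forall (f g : D) (delta : G),
    has_deg le comp f delta -> has_deg le comp g delta ->
    in_int_closure_RD (FracField.tofrac f / FracField.tofrac g) ->
    exists u : D, inK comp u /\ comp delta f = u * comp delta g.
Proof.
move=> hG hD hK hA f g delta [_ [nzf hf]] [_ [nzg hg]] hfg.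
have hlr := leading_ratio_tofrac nzg hg hf.
have [u inKu ehu] := leading_ratio_int_closure hG hD hK hA hfg hlr.
exists u; split => //; apply: tofrac_inj.
by rewrite rmorphM /= -ehu divfK // tofrac_eq0.
Qed.
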